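(* Let $w,w'\in[0,1]$ with $w+w'=1$. For any $\bar{\textbf{A}}=(\textbf{A}_1,\dots,\textbf{A}_n)^T$, $\bar{\textbf{B}}=(\textbf{B}_1,\dots,\textbf{B}_n)^T\in I(\mathbb{R})^n$ and $h\in\mathbb{R}^n$, \[\textbf{0}\preceq h^T\odot(\bar{\textbf{A}}\ominus_{gH}\bar{\textbf{B}})\ \Longrightarrow\ (\mathcal{W}(\bar{\textbf{A}})-\mathcal{W}(\bar{\textbf{B}}))^Th\ge0.\]
   Context: $I(\mathbb{R})$: closed bounded intervals $\textbf{A}=[\underline{a},\overline{a}]$ with Moore arithmetic ($\oplus$ endpointwise; $\lambda\odot\textbf{A}=[\lambda\underline{a},\lambda\overline{a}]$ if $\lambda\ge0$, $[\lambda\overline{a},\lambda\underline{a}]$ if $\lambda<0$); $\textbf{A}\ominus_{gH}\textbf{B}=[\min\{\underline{a}-\underline{b},\overline{a}-\overline{b}\},\max\{\underline{a}-\underline{b},\overline{a}-\overline{b}\}]$, applied componentwise on $I(\mathbb{R})^n$. For $h\in\mathbb{R}^n$ and $\bar{\textbf{C}}\in I(\mathbb{R})^n$, $h^T\odot\bar{\textbf{C}}=\bigoplus_{i=1}^n h_i\odot\textbf{C}_i$. $\textbf{A}\preceq\textbf{B}$ iff $\underline{a}\le\underline{b}$ and $\overline{a}\le\overline{b}$; $\textbf{0}=[0,0]$. $\mathcal{W}:I(\mathbb{R})^n\to\mathbb{R}^n$, $\mathcal{W}(\textbf{A}_1,\dots,\textbf{A}_n)=(w\underline{a}_1+w'\overline{a}_1,\dots,w\underline{a}_n+w'\overline{a}_n)^T$.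 *)

From mathcomp Require Import all_boot all_order all_algebra.
Set Implicit Arguments. Unset Strict Implicit. Unset Printing Implicit Defensive.
Import Order.TTheory GRing.Theory Num.Theory.
Local Open Scope ring_scope.

Record itv (R : realFieldType) := Itv { lo : R; hi : R; itv_ok : lo <= hi }.

Section IntervalArith.
Variable R : realFieldType.

Lemma iadd_ok (A B : itv R) : lo A + lo B <= hi A + hi B.
Proof. by apply: lerD; apply: itv_ok. Qed.

Definition iadd (A B : itv R) : itv R := Itv (iadd_ok A B).

Definition izero : itv R := Itv (lexx (0 : R)).

Lemma iscale_ok (l : R) (A : itv R) :
  (if 0 <= l then l * lo A else l * hi A) <= (if 0 <= l then l * hi A else l * lo A).
Proof.
have hA := itv_ok A.
case: ifP => hl; first by apply: ler_wpM2l.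
apply: ler_wnM2l => //; apply: ltW; rewrite ltNge hl //.
Qed.

Definition iscale (l : R) (A : itv R) : itv R := Itv (iscale_ok l A).

Lemma igH_ok (A B : itv R) :
  Num.min (lo A - lo B) (hi A - hi B) <= Num.max (lo A - lo B) (hi A - hi B).
Proof. by case: (leP (lo A - lo B) (hi A - hi B)) => h; rewrite ?minEle ?maxEle ?h ?(ltW h)// ; case: leP => //; case: leP. Qed.

Definition igH (A B : itv R) : itv R := Itv (igH_ok A B).

Definition ile (A B : itv R) : Prop := lo A <= lo B /\ hi A <= hi B.

Definition vgH n (A B : 'I_n -> itv R) : 'I_n -> itv R := fun i => igH (A i) (B i).

Definition idot n (h : 'cV[R]_n) (C : 'I_n -> itv R) : itv R :=
  \big[iadd/izero]_(i < n) iscale (h i 0) (C i).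

Definition Wmap (w w' : R) n (A : 'I_n -> itv R) : 'cV[R]_n :=
  \col_i (w * lo (A i) + w' * hi (A i)).

End IntervalArith.

From mathcomp Require Import all_boot all_order all_algebra.
From mathcomp Require Import ring.
Import Order.TTheory GRing.Theory Num.Theory.
Local Open Scope ring_scope.

(* Both endpoint differences [lo A - lo B] and [hi A - hi B] lie in the gH
   difference of [A] and [B], so the lower endpoint of [h^T (A -gH B)] bounds
   both [h^T (lo A - lo B)] and [h^T (hi A - hi B)].  The hypothesis makes
   both sums nonnegative, and [(W A - W B)^T h] is their combination with the
   nonnegative weights [w] and [w']. *)

Section IntervalBounds.
Variable R : realFieldType.

Lemma lo_idot n (h : 'cV[R]_n) (C : 'I_n -> itv R) :
  lo (idot h C) = \sum_(i < n) lo (iscale (h i 0) (C i)).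
Proof. exact: (big_morph (@lo R)). Qed.

Lemma lo_iscale_le (l x : R) (C : itv R) :
  lo C <= x <= hi C -> lo (iscale l C) <= l * x.
Proof.
case/andP=> loCx xhiC /=; case: ifP => [l_ge0 | l_lt0].
  exact: ler_wpM2l.
by apply: ler_wnM2l => //; apply: ltW; rewrite ltNge l_lt0.
Qed.

Lemma igH_lo_sub (A B : itv R) :
  lo (igH A B) <= lo A - lo B <= hi (igH A B).
Proof. by rewrite /= ge_min le_max lexx. Qed.

Lemma igH_hi_sub (A B : itv R) :
  lo (igH A B) <= hi A - hi B <= hi (igH A B).
Proof. by rewrite /= ge_min le_max lexx !orbT. Qed.

Lemma lo_idot_le n (h : 'cV[R]_n) (C : 'I_n -> itv R) (x : 'I_n -> R) :
  (forall i, lo (C i) <= x i <= hi (C i)) ->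
  lo (idot h C) <= \sum_(i < n) h i 0 * x i.
Proof.
move=> xC; rewrite lo_idot; apply: ler_sum => i _.
exact: lo_iscale_le.
Qed.

Lemma Wmap_subT_mul (w w' : R) n (A B : 'I_n -> itv R) (h : 'cV[R]_n) :
  ((Wmap w w' A - Wmap w w' B)^T *m h) 0 0 =
  w * \sum_(i < n) h i 0 * (lo (A i) - lo (B i)) +
  w' * \sum_(i < n) h i 0 * (hi (A i) - hi (B i)).
Proof.
rewrite !mulr_sumr -big_split mxE; apply: eq_bigr => i _.
rewrite !mxE /=; ring.
Qed.

End IntervalBounds.

Theorem lemma5p2 (R : realFieldType) (w w' : R) (n : nat)
  (hw0 : 0 <= w) (hw1 : w <= 1) (hw'0 : 0 <= w') (hw'1 : w' <= 1)
  (hww : w + w' = 1)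
  (A B : 'I_n -> itv R) (h : 'cV[R]_n) :
  ile (izero R) (idot h (vgH A B)) ->
  0 <= ((Wmap w w' A - Wmap w w' B)^T *m h) 0 0.
Proof.
move=> [lo_ge0 _].
have lo_sub_ge0 : 0 <= \sum_(i < n) h i 0 * (lo (A i) - lo (B i)).
  by apply: le_trans lo_ge0 _; apply: lo_idot_le => i; apply: igH_lo_sub.
have hi_sub_ge0 : 0 <= \sum_(i < n) h i 0 * (hi (A i) - hi (B i)).
  by apply: le_trans lo_ge0 _; apply: lo_idot_le => i; apply: igH_hi_sub.
by rewrite Wmap_subT_mul addr_ge0 // mulr_ge0.
Qed.
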